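(* Let $p\ge3$ and consider the dynamic panel logit AR($p$) model with $T=4$: binary outcomes $Y_{1-p},\dots,Y_0,Y_1,\dots,Y_4\in\{0,1\}$, regressors $X=(X_1,\dots,X_4)\in\mathbb{R}^{K\times4}$, fixed effect $A\in\mathbb{R}$, with, for $t\in\{1,\dots,4\}$, $$\Pr(Y_t=1\mid Y_{1-p},\dots,Y_{t-1},X,A)=\frac{\exp(X_t'\beta_0+\sum_{\ell=1}^pY_{t-\ell}\gamma_{0,\ell}+A)}{1+\exp(X_t'\beta_0+\sum_{\ell=1}^pY_{t-\ell}\gamma_{0,\ell}+A)}$$ and true parameters $\beta_0\in\mathbb{R}^K$, $\gamma_0\in\mathbb{R}^p$. Let $Y^{(0)}=(Y_{1-p},\dots,Y_0)$, $0_p$ the $p$-vector of zeros, $x_{ts}=x_t-x_s$, and for $y=(y_1,\dots,y_4)\in\{0,1\}^4$, $x=(x_1,x_2,x_3,x_3)$, $\beta\in\mathbb{R}^K$, $\gamma\in\mathbb{R}^p$ define $$m^{(a)}=\begin{cases}e^{x_{23}'\beta}&y=(0,0,1,0),\\ e^{x_{23}'\beta-\gamma_1}&y=(0,0,1,1),\\ -1&(y_1,y_2,y_3)=(0,1,0),\\0&\text{otherwise},\end{cases}\qquad m^{(b)}=\begin{cases}e^{x_{12}'\beta}&(y_1,y_2,y_3)=(0,1,0),\\ e^{x_{12}'\beta}[1+e^{x_{23}'\beta-\gamma_1}-e^{\gamma_2}]&y=(0,1,1,0),\\ e^{x_{13}'\beta-\gamma_1-\gamma_2}&y=(0,1,1,1),\\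 -1&(y_1,y_2)=(1,0),\\ e^{x_{32}'\beta+\gamma_2}-1&(y_1,y_2,y_3)=(1,1,0),\\0&\text{otherwise},\end{cases}$$ $$m^{(c)}=\begin{cases}-e^{\gamma_1}&y=(0,0,1,0),\\ -1&y=(0,0,1,1),\\ e^{x_{32}'\beta}[e^{\gamma_1}-e^{\gamma_2}]&y=(0,1,0,0),\\ e^{\gamma_1-\gamma_2}-1&y=(0,1,0,1),\\ -1&(y_1,y_2,y_3)=(0,1,1),\\ e^{x_{31}'\beta+\gamma_2}&(y_1,y_2,y_3)=(1,0,0),\\ e^{x_{21}'\beta+\gamma_1}&(y_1,y_2,y_3)=(1,0,1),\\0&\text{otherwise}.\end{cases}$$ Then for all $(x_1,x_2,x_3)\in\mathbb{R}^{K\times3}$, $\alpha\in\mathbb{R}$ and $\xi\in\{a,b,c\}$, $$\mathbb{E}\big[m^{(\xi)}(Y,X,\beta_0,\gamma_0)\mid Y^{(0)}=0_p,X=(x_1,x_2,x_3,x_3),A=\alpha\big]=0,$$ where $Y=(Y_1,\dots,Y_4)$.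
   Context: The joint distribution of $(Y^{(0)},X,A)$ is unrestricted; only the conditional law of $(Y_1,\dots,Y_4)$ given $(Y^{(0)},X,A)$ is specified by the model. The paper defines $m^{(a)}$ as $\mathbb{1}(y_1=0)$ times the $T=3$ moment function for initial condition $0_p$ applied to $(y_2,y_3,y_4)$ and regressors $(x_2,x_3,x_3)$, and $m^{(b)}$ as the AR(2), $T=4$ moment function $m^{(d)}_{(0,0)}$ evaluated at $x=(x_1,x_2,x_3,x_3)$ and $(\gamma_1,\gamma_2)$; the displayed formulas are these functions written out explicitly (with $x_4=x_3$ substituted). *)

From HB Require Import structures.
From mathcomp Require Import all_boot all_order all_algebra.
From mathcomp Require Import reals sequences exp.
Set Implicit Arguments. Unset Strict Implicit. Unset Printing Implicit Defensive.
Import Order.TTheory GRing.Theory Num.Theory.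
Local Open Scope ring_scope.

Section Model.
Variable R : realType.

Definition Lambda (u : R) : R := expR u / (1 + expR u).

(* Outcomes Y_1..Y_4 are stored in y : {ffun 'I_4 -> bool}; Y y t = Y_t (t = 1..4). *)
Definition Y (y : {ffun 'I_4 -> bool}) (t : nat) : bool := y (inord t.-1).

(* Initial condition: y0 j = Y_{-j}, j = 0..p-1 (i.e. Y_0, Y_{-1}, ..., Y_{1-p}).
   lag y0 y t l = Y_{t-l}. *)
Definition lag (y0 : nat -> bool) (y : {ffun 'I_4 -> bool}) (t l : nat) : bool :=
  if (l < t)%N then Y y (t - l) else y0 (l - t)%N.

(* inner product x_t' beta; regressors X : nat -> 'I_K -> R, X t = x_t (t = 1..4) *)
Definition xb (K : nat) (X : nat -> 'I_K -> R) (beta : 'I_K -> R) (t : nat) : R :=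
  \sum_(k < K) X t k * beta k.

(* gamma : nat -> R, gamma l = gamma_l for l = 1..p (other values unused) *)
Definition lindex (K p : nat) (X : nat -> 'I_K -> R) (beta : 'I_K -> R)
  (gamma : nat -> R) (y0 : nat -> bool) (alpha : R) (y : {ffun 'I_4 -> bool}) (t : nat) : R :=
  xb X beta t + \sum_(1 <= l < p.+1) (lag y0 y t l)%:R * gamma l + alpha.

Definition prob (K p : nat) (X : nat -> 'I_K -> R) (beta : 'I_K -> R)
  (gamma : nat -> R) (y0 : nat -> bool) (alpha : R) (y : {ffun 'I_4 -> bool}) : R :=
  \prod_(i < 4)
    (let u := Lambda (lindex p X beta gamma y0 alpha y i.+1) in
     if y i then u else 1 - u).

Definition condE (K p : nat) (X : nat -> 'I_K -> R) (beta : 'I_K -> R)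
  (gamma : nat -> R) (y0 : nat -> bool) (alpha : R)
  (m : {ffun 'I_4 -> bool} -> R) : R :=
  \sum_(y : {ffun 'I_4 -> bool}) prob p X beta gamma y0 alpha y * m y.

Definition xfull (K : nat) (x : nat -> 'I_K -> R) : nat -> 'I_K -> R :=
  fun t => if t == 4%N then x 3%N else x t.

Definition xd (K : nat) (x : nat -> 'I_K -> R) (beta : 'I_K -> R) (t s : nat) : R :=
  \sum_(k < K) (x t k - x s k) * beta k.

Definition m_a (K : nat) (x : nat -> 'I_K -> R) (beta : 'I_K -> R) (gamma : nat -> R)
  (y : {ffun 'I_4 -> bool}) : R :=
  match Y y 1, Y y 2, Y y 3, Y y 4 with
  | false, false, true, false => expR (xd x beta 2 3)
  | false, false, true, true => expR (xd x beta 2 3 - gamma 1%N)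
  | false, true, false, _ => -1
  | _, _, _, _ => 0
  end.

Definition m_b (K : nat) (x : nat -> 'I_K -> R) (beta : 'I_K -> R) (gamma : nat -> R)
  (y : {ffun 'I_4 -> bool}) : R :=
  match Y y 1, Y y 2, Y y 3, Y y 4 with
  | false, true, false, _ => expR (xd x beta 1 2)
  | false, true, true, false =>
      expR (xd x beta 1 2) * (1 + expR (xd x beta 2 3 - gamma 1%N) - expR (gamma 2%N))
  | false, true, true, true => expR (xd x beta 1 3 - gamma 1%N - gamma 2%N)
  | true, false, _, _ => -1
  | true, true, false, _ => expR (xd x beta 3 2 + gamma 2%N) - 1
  | _, _, _, _ => 0
  end.

Definition m_c (K : nat) (x : nat -> 'I_K -> R) (beta : 'I_K -> R) (gamma : nat -> R)
  (y : {ffun 'I_4 -> bool}) : R :=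
  match Y y 1, Y y 2, Y y 3, Y y 4 with
  | false, false, true, false => - expR (gamma 1%N)
  | false, false, true, true => -1
  | false, true, false, false => expR (xd x beta 3 2) * (expR (gamma 1%N) - expR (gamma 2%N))
  | false, true, false, true => expR (gamma 1%N - gamma 2%N) - 1
  | false, true, true, _ => -1
  | true, false, false, _ => expR (xd x beta 3 1 + gamma 2%N)
  | true, false, true, _ => expR (xd x beta 2 1 + gamma 1%N)
  | _, _, _, _ => 0
  end.

End Model.

Inductive xi_t := Xa | Xb | Xc.

Definition m_xi (R : realType) (xi : xi_t) :=
  match xi with Xa => @m_a R | Xb => @m_b R | Xc => @m_c R end.

(* With the zero initial condition and p >= 3, only gamma_1, gamma_2, gamma_3 enter the
   first four periods, and the conditional law of (Y_1, ..., Y_4) is a product of logistic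
   factors e^(u_t y_t) / (1 + e^(u_t)).  Each conditional moment is thus a sum over the 16
   outcome paths of a rational function of the positive numbers e^(x_t' beta_0),
   e^(gamma_l) and e^alpha; since x_4 = x_3, clearing the denominators 1 + e^(u_t) shows
   that each sum vanishes identically. *)

From HB Require Import structures.
From mathcomp Require Import all_boot all_order all_algebra.
From mathcomp Require Import reals sequences exp.
From mathcomp Require Import ring.
Set Implicit Arguments. Unset Strict Implicit. Unset Printing Implicit Defensive.
Import Order.TTheory GRing.Theory Num.Theory.
Local Open Scope ring_scope.

Definition outcome (b1 b2 b3 b4 : bool) : {ffun 'I_4 -> bool} :=
  [ffun i : 'I_4 => nth false [:: b1; b2; b3; b4] i].

Lemma Y_outcome b1 b2 b3 b4 t : (t <= 4)%N ->
  Y (outcome b1 b2 b3 b4) t = nth false [:: b1; b2; b3; b4] t.-1.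
Proof. by move=> t_le4; rewrite /Y ffunE inordK //; case: t t_le4. Qed.

Lemma sum_outcomes (V : nmodType) (F : {ffun 'I_4 -> bool} -> V) :
  \sum_y F y = \sum_b1 \sum_b2 \sum_b3 \sum_b4 F (outcome b1 b2 b3 b4).
Proof.
rewrite !pair_bigA /=.
pose h (b : bool * bool * bool * bool) := outcome b.1.1.1 b.1.1.2 b.1.2 b.2.
pose unh (y : {ffun 'I_4 -> bool}) := (y (inord 0), y (inord 1), y (inord 2), y (inord 3)).
rewrite (reindex h) //; exists unh => [[[[b1 b2] b3] b4] _ | y _].
  by rewrite /unh /h !ffunE !inordK.
apply/ffunP => -[[|[|[|[|i]]]] lti] //; rewrite ffunE /=; congr (y _); exact/val_inj/inordK.
Qed.

Section LogitModel.
Variable R : realType.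

Lemma lindex_zero_init K p X (beta : 'I_K -> R) gamma alpha y t : (t <= p.+1)%N ->
  lindex p X beta gamma (fun=> false) alpha y t =
  xb X beta t + \sum_(1 <= l < t) (Y y (t - l))%:R * gamma l + alpha.
Proof.
case: t => [_|t t_le]; rewrite /lindex.
  by rewrite [in RHS]big_geq // big1 // => l _; rewrite /lag mul0r.
rewrite (big_cat_nat _ (n := t.+1)) //= [\sum_(t.+1 <= l < p.+1) _]big1_seq ?addr0 => [|l].
  by congr (_ + _ + _); apply: eq_big_nat => l /andP[_ lt_lt]; rewrite /lag lt_lt.
rewrite mem_index_iota /lag => /andP[_ /andP[le_tl _]].
by rewrite ltnNge le_tl mul0r.
Qed.

Definition bernoulli_pmf (b : bool) (q : R) : R := if b then q else 1 - q.

Lemma bernoulli_pmf_Lambda b u :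
  bernoulli_pmf b (Lambda u) = (if b then expR u else 1) / (1 + expR u).
Proof.
have den_neq0 : 1 + expR u != 0 by rewrite lt0r_neq0 // addr_gt0 ?expR_gt0.
by case: b; rewrite /bernoulli_pmf /Lambda //; field.
Qed.

Lemma prob_zero_init K p (p_ge3 : (3 <= p)%N) X (beta : 'I_K -> R) gamma alpha y :
  prob p X beta gamma (fun=> false) alpha y =
  bernoulli_pmf (Y y 1) (Lambda (xb X beta 1 + alpha)) *
  bernoulli_pmf (Y y 2) (Lambda (xb X beta 2 + (Y y 1)%:R * gamma 1%N + alpha)) *
  bernoulli_pmf (Y y 3) (Lambda (xb X beta 3 + (Y y 2)%:R * gamma 1%N
    + (Y y 1)%:R * gamma 2%N + alpha)) *
  bernoulli_pmf (Y y 4) (Lambda (xb X beta 4 + (Y y 3)%:R * gamma 1%N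
    + (Y y 2)%:R * gamma 2%N + (Y y 1)%:R * gamma 3%N + alpha)).
Proof.
have le_p1 t : (t <= 4)%N -> (t <= p.+1)%N by move/leq_trans; apply.
have -> : prob p X beta gamma (fun=> false) alpha y = \prod_(0 <= t < 4)
    bernoulli_pmf (Y y t.+1) (Lambda (lindex p X beta gamma (fun=> false) alpha y t.+1)).
  by rewrite big_mkord; apply: eq_bigr => t _; rewrite /Y inord_val.
rewrite /index_iota /= !big_cons big_nil mulr1 !lindex_zero_init ?le_p1 //.
by rewrite /index_iota /= !big_cons !big_nil !addr0 !mulrA !addrA.
Qed.

Lemma xb_xfull K (x : nat -> 'I_K -> R) beta t :
  xb (xfull x) beta t = xb x beta (if t == 4%N then 3%N else t).
Proof. by rewrite /xb /xfull; case: (t == 4%N). Qed.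

Lemma xdE K (x : nat -> 'I_K -> R) beta t s : xd x beta t s = xb x beta t - xb x beta s.
Proof. by rewrite /xd /xb -sumrB; apply: eq_bigr => k _; rewrite mulrBl. Qed.

End LogitModel.

Theorem lemma6 (R : realType) (K p : nat) (hp : (3 <= p)%N)
  (beta0 : 'I_K -> R) (gamma0 : nat -> R)
  (x : nat -> 'I_K -> R) (alpha : R) (xi : xi_t) :
  condE p (xfull x) beta0 gamma0 (fun _ => false) alpha
    (m_xi xi x beta0 gamma0) = 0.
Proof.
rewrite /condE sum_outcomes !big_bool /=.
rewrite !prob_zero_init // !bernoulli_pmf_Lambda !Y_outcome //= !xb_xfull /=.
case: xi; rewrite /= /m_a /m_b /m_c !Y_outcome //= !xdE.
all: rewrite ?mul0r ?mul1r ?mulr0 ?addr0 ?add0r !expRD ?expRN.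
all: field; repeat (apply/andP; split); apply: lt0r_neq0.
all: repeat first [apply: addr_gt0 | apply: mulr_gt0 | apply: expR_gt0 | apply: ltr01].
Qed.
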